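(* Let $F\in\mathbb{R}[x,y,t,s]$ be square-free, with no factor depending only on $(t,s)$, and such that the leading coefficient $A_n(t,s)$ of $F$ with respect to $y$ does not depend on $x$. Let $M(x,t,s)=\sqrt{D_y(F)}$ and $R(t,s)=D_x(M)$, and assume $R$ is not identically zero. Let $t_0\in\mathbb{R}$ be such that $t-t_0$ is not a factor of $R(t,s)$. Then: (i) $A_n(t_0,s)\neq 0$; in particular $\deg_y F(x,y,t_0,s)=\deg_y F$; (ii) $\mathrm{Res}_y(F,F_y)$ specializes well at $t=t_0$, i.e. $\mathrm{Res}_y(F,F_y)(x,t_0,s)=\mathrm{Res}_y\big(F(x,y,t_0,s),F_y(x,y,t_0,s)\big)$, where $F_y=\partial F/\partial y$; (iii) $F(x,y,t_0,s)$ is square-free as a polynomial in the variables $x,y$ (it has no repeated factor of positive degree in $(x,y)$). The analogous statements hold for $s_0\in\mathbb{R}$ such that $s-s_0$ is not a factor of $R(t,s)$, with the specialization $s=s_0$.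
   Context: For a polynomial $G$ and a variable $w$, $D_w(G):=\mathrm{Res}_w(G,\partial G/\partial w)$, and $\sqrt{G}$ denotes the square-free part of $G$. By convention $M:=0$ if $\deg_y F=0$ and $R:=0$ if $\deg_x M=0$. *)

From mathcomp Require Import all_boot all_order all_algebra.
Set Implicit Arguments. Unset Strict Implicit. Unset Printing Implicit Defensive.
Import Order.TTheory GRing.Theory Num.Theory.
Local Open Scope ring_scope.

(* Variable ordering for R[x,y,t,s]:
     {poly R}                         = R[t]           (variable t)
     {poly {poly R}}                  = R[t][s]        (variable s)
     {poly {poly {poly R}}}           = R[t,s][x]      (variable x)
     {poly {poly {poly {poly R}}}}    = R[t,s,x][y]    (variable y)            *)

Definition rdvd (T : comNzRingType) (a b : T) : Prop := exists c : T, b = c * a.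

(* Square-free: no non-unit g with g^2 | p (units of these polynomial rings are
   exactly the nonzero real constants). *)
Definition sqfree (T : comUnitRingType) (p : T) : Prop :=
  forall g : T, rdvd (g * g) p -> g \is a GRing.unit.

Definition is_sqfree_part (T : comUnitRingType) (G M : T) : Prop :=
  sqfree M /\ rdvd M G /\ exists k : nat, rdvd G (M ^+ k).

Definition Dres (T : comNzRingType) (G : {poly T}) : T := resultant G G^`().

Definition no_ts_factor (R : fieldType) (F : {poly {poly {poly {poly R}}}}) : Prop :=
  forall g : {poly {poly R}}, rdvd (g%:P%:P) F -> g \is a GRing.unit.

(* square-free as a polynomial in x,y (coefficients in R[param]):
   no repeated factor of positive degree in (x,y) *)
Definition sqfree_xy (R : fieldType) (P : {poly {poly {poly R}}}) : Prop :=
  forall g : {poly {poly {poly R}}}, rdvd (g * g) P ->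
    (size g <= 1)%N /\ (size (g`_0)%R <= 1)%N.

Definition spec_t (R : fieldType) (t0 : R) (c : {poly {poly R}}) : {poly R} :=
  map_poly (fun a : {poly R} => a.[t0]) c.      (* result in R[s] *)
Definition spec_s (R : fieldType) (s0 : R) (c : {poly {poly R}}) : {poly R} :=
  c.[s0%:P].                                     (* result in R[t] *)

(* convention: R := 0 if deg_x M = 0 *)
Definition Rconv (R : fieldType) (M : {poly {poly {poly R}}}) : {poly {poly R}} :=
  if (size M <= 1)%N then 0 else Dres M.

From mathcomp Require Import all_boot all_order all_algebra.
From mathcomp Require Import zify.
Set Implicit Arguments. Unset Strict Implicit. Unset Printing Implicit Defensive.
Import Order.TTheory GRing.Theory Num.Theory.
Local Open Scope ring_scope.

(* Let sg be the specialization t = t0 (or s = s0), a ring morphism whose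
   kernel consists of multiples of t - t0.  If sg killed D_y(F), it would kill
   the square-free part M, a power of which D_y(F) divides; hence it would
   kill all coefficients of M and so D_x(M) = R, which is excluded.  Then:
   (i) if sg(A_n) = 0, the leading coefficients of F and F_y both vanish under
   sg, and so does their resultant;
   (ii) once the leading coefficients survive, the resultant commutes with sg;
   (iii) a square factor of positive y-degree divides both sg(F) and its
   y-derivative, hence their resultant, which is nonzero; a square factor of
   y-degree 0 divides the leading coefficient sg(A_n), of x-degree 0. *)

(* The last column of the Sylvester matrix only involves the leading
   coefficients of p and q. *)
Lemma rmorph_resultant_eq0 (A B : comNzRingType) (f : {rmorphism A -> B})
    (p q : {poly A}) :
  (1 < size p)%N -> f (lead_coef p) = 0 -> f (lead_coef q) = 0 ->
  f (resultant p q) = 0.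
Proof.
move=> p_gt1 fp0 fq0.
have f_top (r : {poly A}) m : f (lead_coef r) = 0 -> ((size r).-1 <= m)%N ->
    f r`_m = 0.
  move=> fr0; rewrite leq_eqVlt => /orP[/eqP<- //|lt_m].
  by rewrite nth_default ?rmorph0 //; move: lt_m; case: (size r).
rewrite /resultant -det_map_mx.
have lt_j : (((size q).-1 + (size p).-1).-1 < (size q).-1 + (size p).-1)%N.
  by rewrite prednK //; have := p_gt1; case: (size p) => // n; lia.
rewrite (expand_det_col _ (Ordinal lt_j)) big1 // => i _.
rewrite mxE Sylvester_mxE.
case: splitP => k /= _; case: leqP => le_k; rewrite ?mulr0n ?rmorph0 ?mul0r //.
all: rewrite rmorphMn f_top ?mul0rn ?mul0r //; move: le_k (ltn_ord k) p_gt1.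
all: by move: (nat_of_ord k) => a; rewrite -!subn1; lia.
Qed.

Section CharZero.

Variable T : idomainType.
Hypothesis charT0 : [pchar T] =i pred0.

Lemma mulrn_eq0_pchar0 (x : T) n : (x *+ n == 0) = (n == 0)%N || (x == 0).
Proof. by rewrite -mulr_natr mulf_eq0 orbC (pcharf0P _).1. Qed.

Lemma size_deriv_pchar0 (p : {poly T}) : size p^`() = (size p).-1.
Proof.
have [->|p_nz] := eqVneq p 0; first by rewrite deriv0 size_poly0.
apply/eqP; rewrite eqn_leq -ltnS prednK ?size_poly_gt0 // lt_size_deriv //=.
case def_n: (size p).-1 => [//|n].
have : p^`()`_n != 0.
  by rewrite coef_deriv -def_n mulrn_eq0_pchar0 -lead_coefE lead_coef_eq0 def_n.
by rewrite ltnNge; apply: contra => /leq_sizeP->.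
Qed.

Lemma lead_coef_deriv_pchar0 (p : {poly T}) :
  lead_coef p^`() = lead_coef p *+ (size p).-1.
Proof.
rewrite /lead_coef size_deriv_pchar0 coef_deriv.
by case sz_p: (size p) => [|[|n]] //=; rewrite mulr0n nth_default ?sz_p.
Qed.

End CharZero.

Lemma rmorph_Dres_eq0 (A : idomainType) (B : comNzRingType)
    (f : {rmorphism A -> B}) (p : {poly A}) :
  [pchar A] =i pred0 -> (1 < size p)%N -> f (lead_coef p) = 0 -> f (Dres p) = 0.
Proof.
move=> charA0 p_gt1 fp0; apply: rmorph_resultant_eq0 => //.
by rewrite lead_coef_deriv_pchar0 // rmorphMn fp0 mul0rn.
Qed.

Lemma map_Dres (A B : idomainType) (f : {rmorphism {poly A} -> B})
    (p : {poly {poly A}}) :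
  [pchar A] =i pred0 -> [pchar B] =i pred0 ->
  (1 < size p)%N -> f (lead_coef p) != 0 -> f (Dres p) = Dres (map_poly f p).
Proof.
move=> charA0 charB0 p_gt1 fp_nz; rewrite /Dres map_resultant ?deriv_map //.
have charPA0 : [pchar {poly A}] =i pred0 by move=> n; rewrite pchar_poly.
rewrite lead_coef_deriv_pchar0 // rmorphMn mulrn_eq0_pchar0 // negb_or fp_nz.
by rewrite -subn1 subn_eq0 -ltnNge p_gt1.
Qed.

Lemma Dres_eq0_sqr_rdvd (T : idomainType) (G g : {poly T}) :
  [pchar T] =i pred0 -> G != 0 -> rdvd (g * g) G -> (1 < size g)%N -> Dres G = 0.
Proof.
move=> charT0 G_nz [c defG] g_gt1.
have g_G : g %| G by rewrite defG mulrA dvdp_mulIr.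
have g_G' : g %| G^`().
  by rewrite defG mulrA derivM dvdp_add ?dvdp_mulIr // dvdp_mulr ?dvdp_mulIr.
have G_gt1 : (1 < size G)%N := leq_trans g_gt1 (dvdp_leq G_nz g_G).
have G'_nz : G^`() != 0.
  by rewrite -size_poly_gt0 size_deriv_pchar0 // -subn1 subn_gt0.
have G'_gt1 : (1 < size G^`())%N := leq_trans g_gt1 (dvdp_leq G'_nz g_G').
have [[u v] _ defRes] := resultant_in_ideal G_gt1 G'_gt1.
have g_Res : g %| (Dres G)%:P by rewrite /Dres defRes dvdp_add ?dvdp_mull.
apply/eqP; apply: contraTT g_gt1 => Res_nz; rewrite -leqNgt.
by rewrite (leq_trans (dvdp_leq _ g_Res)) ?size_polyC ?leq_b1 ?polyC_eq0.
Qed.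

Lemma rdvd_polyC_size_le1 (T : idomainType) (b : {poly T}) (a : T) :
  a != 0 -> rdvd b a%:P -> (size b <= 1)%N.
Proof.
move=> a_nz [q /(congr1 (fun r : {poly T} => size r))/eqP].
by rewrite eq_sym size_polyC a_nz size_mul_eq1 => /andP[_ /eqP->].
Qed.

Lemma sqfree_xy_lead_coefC (K : fieldType) (G : {poly {poly {poly K}}})
    (a : {poly K}) :
  [pchar K] =i pred0 -> lead_coef G = a%:P -> a != 0 -> Dres G != 0 ->
  sqfree_xy G.
Proof.
move=> charK0 lcG a_nz Res_nz g [c defG].
have charK2 : [pchar {poly {poly K}}] =i pred0 by move=> n; rewrite !pchar_poly.
have G_nz : G != 0 by rewrite -lead_coef_eq0 lcG polyC_eq0.
have g_le1 : (size g <= 1)%N.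
  rewrite leqNgt; apply: contra Res_nz => g_gt1.
  by rewrite (Dres_eq0_sqr_rdvd charK2 G_nz _ g_gt1) //; exists c.
split=> //; apply: (rdvd_polyC_size_le1 a_nz).
have lc_g : lead_coef g = g`_0.
  by rewrite lead_coefE; case: (size g) g_le1 => [|[|]].
by exists (lead_coef c * g`_0); rewrite -mulrA -lcG defG !lead_coefM lc_g.
Qed.

Section Specialization.

Variables (R : fieldType) (sg : {rmorphism {poly {poly R}} -> {poly R}}).
Variable d : {poly {poly R}}.
Hypothesis charR0 : [pchar R] =i pred0.
Hypothesis sg_ker : forall c, sg c = 0 -> rdvd d c.

Variables (F : {poly {poly {poly {poly R}}}}) (M : {poly {poly {poly R}}}).
Hypothesis F_lead : (size (lead_coef F) <= 1)%N.
Hypothesis M_F : (size F <= 1)%N -> M = 0.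
Hypothesis M_part : (1 < size F)%N -> is_sqfree_part (Dres F) M.
Hypothesis d_R : ~ rdvd d (Rconv M).

Local Notation sgF := (map_poly (map_poly sg) F).

Let charR2 : [pchar {poly {poly R}}] =i pred0.
Proof. by move=> n; rewrite !pchar_poly charR0. Qed.

Let charR3 : [pchar {poly {poly {poly R}}}] =i pred0.
Proof. by move=> n; rewrite !pchar_poly charR0. Qed.

Lemma size_F_gt1 : (1 < size F)%N.
Proof.
rewrite ltnNge; apply/negP => /M_F M0; apply: d_R.
by rewrite M0 /Rconv size_poly0; exists 0; rewrite mul0r.
Qed.

(* A vanishing specialized discriminant would also kill the square-free part
   M, hence all coefficients of M and finally D_x(M). *)
Lemma spec_Dres_neq0 : map_poly sg (Dres F) != 0.
Proof.
apply/eqP => sgRes0; apply: d_R.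
have [_ [_ [k [c defMk]]]] := M_part size_F_gt1.
have sgM0 : map_poly sg M = 0.
  apply/eqP; have /eqP := congr1 (map_poly sg) defMk.
  by rewrite rmorphXn rmorphM /= sgRes0 mulr0 expf_eq0 => /andP[].
have [M_le1 | M_gt1] := leqP (size M) 1.
  by rewrite /Rconv M_le1; exists 0; rewrite mul0r.
rewrite /Rconv leqNgt M_gt1 /=; apply: sg_ker; apply: rmorph_Dres_eq0 => //.
by rewrite lead_coefE -coef_map sgM0 coef0.
Qed.

Let sg_lead_coef : map_poly sg (lead_coef F) = (sg (lead_coef F)`_0)%:P.
Proof. by rewrite [in LHS](size1_polyC F_lead) map_polyC. Qed.

Lemma spec_lead_neq0 : sg (lead_coef F)`_0 != 0.
Proof.
apply: contra spec_Dres_neq0 => /eqP sgA0; apply/eqP.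
by apply: rmorph_Dres_eq0 => //=; rewrite ?size_F_gt1 // sg_lead_coef sgA0.
Qed.

Let sg_lead_coef_neq0 : map_poly sg (lead_coef F) != 0.
Proof. by rewrite sg_lead_coef polyC_eq0 spec_lead_neq0. Qed.

Lemma spec_size : size sgF = size F.
Proof. exact: size_map_poly_id0. Qed.

Lemma spec_Dres : map_poly sg (Dres F) = Dres sgF.
Proof. exact: map_Dres size_F_gt1 sg_lead_coef_neq0. Qed.

Lemma spec_sqfree_xy : sqfree_xy sgF.
Proof.
apply: (sqfree_xy_lead_coefC charR0 _ spec_lead_neq0).
  by rewrite lead_coef_map_id0 ?rmorph0 //= sg_lead_coef.
by rewrite -spec_Dres spec_Dres_neq0.
Qed.

Lemma good_specialization :
  [/\ sg (lead_coef F)`_0 != 0, size sgF = size F,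
      map_poly sg (Dres F) = Dres sgF & sqfree_xy sgF].
Proof.
by split; [exact: spec_lead_neq0 | exact: spec_size | exact: spec_Dres
          | exact: spec_sqfree_xy].
Qed.

End Specialization.

Lemma rdvd_polyC_XsubC_map_horner (R : fieldType) (t0 : R)
    (c : {poly {poly R}}) :
  map_poly (horner_eval t0) c = 0 -> rdvd ('X - t0%:P)%:P c.
Proof.
move=> c_t0; exists (\poly_(i < size c) (c`_i %/ ('X - t0%:P))).
apply/polyP => i; rewrite coefMC coef_poly; case: ltnP => [_|c_le_i].
  rewrite divpK // dvdp_XsubCl /root -[_.[t0]]/(horner_eval t0 c`_i).
  by rewrite -coef_map c_t0 coef0.
by rewrite mul0r nth_default.
Qed.

Theorem lemma10 (R : realFieldType)
  (F : {poly {poly {poly {poly R}}}}) (M : {poly {poly {poly R}}}) :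
  sqfree F ->
  no_ts_factor F ->
  (size (lead_coef F) <= 1)%N ->
  ((size F <= 1)%N -> M = 0) ->
  ((1 < size F)%N -> is_sqfree_part (Dres F) M) ->
  Rconv M != 0 ->
  (forall t0 : R,
     ~ rdvd (('X - t0%:P)%:P) (Rconv M) ->
     [/\ spec_t t0 (lead_coef F)`_0 != 0,
         size (map_poly (map_poly (spec_t t0)) F) = size F,
         map_poly (spec_t t0) (Dres F)
           = Dres (map_poly (map_poly (spec_t t0)) F)
       & sqfree_xy (map_poly (map_poly (spec_t t0)) F)]) /\
  (forall s0 : R,
     ~ rdvd ('X - (s0%:P)%:P) (Rconv M) ->
     [/\ spec_s s0 (lead_coef F)`_0 != 0,
         size (map_poly (map_poly (spec_s s0)) F) = size F,
         map_poly (spec_s s0) (Dres F)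
           = Dres (map_poly (map_poly (spec_s s0)) F)
       & sqfree_xy (map_poly (map_poly (spec_s s0)) F)]).
Proof.
move=> _ _ F_lead M_F M_part _; have charR0 := pchar_num R.
split=> [t0 | s0] d_R.
  have sg_ker := @rdvd_polyC_XsubC_map_horner R t0.
  exact: (good_specialization charR0 sg_ker F_lead M_F M_part d_R).
have sg_ker (c : {poly {poly R}}) :
    horner_eval s0%:P c = 0 -> rdvd ('X - s0%:P%:P) c.
  by move=> c_s0; apply/factor_theorem/eqP.
exact: (good_specialization charR0 sg_ker F_lead M_F M_part d_R).
Qed.
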